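(* Let $M \in \{0,1\}^{n \times n}$ be a $d$-mixed-free binary matrix. Then $M$ admits a rectangle-decomposition $\mathcal{R}$ with $|\mathcal{R}| \in 2^{\mathcal{O}(d)} \cdot n$.
   Context: A $k$-division of $M$ is a pair $(\mathcal{R},\mathscr{C})$ of partitions of $[n]$ each into exactly $k$ contiguous non-empty intervals; its cells are the submatrices with rows in one interval of $\mathcal{R}$ and columns in one interval of $\mathscr{C}$. A matrix is mixed if it is neither horizontal (all its rows are equal) nor vertical (all its columns are equal). $M$ is $d$-mixed-free if it admits no $d$-division all of whose cells are mixed. A $1$-rectangle of $M$ is a contiguous submatrix all of whose entries are $1$; a rectangle-decomposition of $M$ is a collection of pairwise disjoint $1$-rectangles whose union is exactly the set of positions of $1$-entries of $M$. *)

From mathcomp Require Import all_boot all_algebra.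
Set Implicit Arguments. Unset Strict Implicit. Unset Printing Implicit Defensive.

(* Indices of [n] are 0..n-1 (the ordinals 'I_n).  A partition of [n] into
   exactly k contiguous non-empty intervals is encoded by its boundary sequence
   0 = s_0 < s_1 < ... < s_k = n; the i-th interval (i < k) is [s_i, s_{i+1}). *)
Definition interval_partition (n k : nat) (s : seq nat) : bool :=
  [&& size s == k.+1, sorted ltn s, head 0 s == 0 & last 0 s == n].

Definition in_block (a b c e : nat) n (x y : 'I_n) : bool :=
  (a <= x < b) && (c <= y < e).

Definition horizontal n (M : 'M[bool]_n) (a b c e : nat) : bool :=
  [forall x : 'I_n, forall x' : 'I_n, forall y : 'I_n,
     (in_block a b c e x y && in_block a b c e x' y) ==> (M x y == M x' y)].

Definition vertical n (M : 'M[bool]_n) (a b c e : nat) : bool :=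
  [forall x : 'I_n, forall y : 'I_n, forall y' : 'I_n,
     (in_block a b c e x y && in_block a b c e x y') ==> (M x y == M x y')].

Definition mixed n (M : 'M[bool]_n) (a b c e : nat) : bool :=
  ~~ horizontal M a b c e && ~~ vertical M a b c e.

Definition has_mixed_division n (M : 'M[bool]_n) (d : nat) : Prop :=
  exists (R C : seq nat),
    [/\ interval_partition n d R, interval_partition n d C &
        forall i j, i < d -> j < d ->
          mixed M (nth 0 R i) (nth 0 R i.+1) (nth 0 C j) (nth 0 C j.+1)].

Definition mixed_free n (M : 'M[bool]_n) (d : nat) : Prop :=
  ~ has_mixed_division M d.

(* A rectangle ((a,b),(c,e)) is the contiguous non-empty block of positions
   with rows a <= x < b and columns c <= y < e (a < b <= n, c < e <= n). *)
Definition rect := ((nat * nat) * (nat * nat))%type.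

Definition rect_valid (n : nat) (r : rect) : bool :=
  let: ((a, b), (c, e)) := r in [&& a < b <= n & c < e <= n].

Definition in_rect n (r : rect) (x y : 'I_n) : bool :=
  let: ((a, b), (c, e)) := r in in_block a b c e x y.

Definition one_rect n (M : 'M[bool]_n) (r : rect) : Prop :=
  rect_valid n r /\ forall x y : 'I_n, in_rect r x y -> M x y = true.

Definition rect_decomposition n (M : 'M[bool]_n) (Rs : seq rect) : Prop :=
  [/\ uniq Rs,
      forall r, r \in Rs -> one_rect M r,
      forall r r', r \in Rs -> r' \in Rs -> r != r' ->
        forall x y : 'I_n, ~~ (in_rect r x y && in_rect r' x y) &
      forall x y : 'I_n, M x y = true <-> exists2 r, r \in Rs & in_rect r x y].

(* The ones of M are covered by its maximal rectangles: each row splits into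
   maximal runs of ones, and consecutive rows carrying the same run are stacked.
   A rectangle that neither touches the top edge nor spans whole rows differs
   from the row above it, which forces a mixed 2 x 2 window (a corner) right
   above its top row.  Charging each rectangle to such a corner, to its top row
   or to its top-left cell bounds their number by #corners + 2n.

   A 2d x 2d grid of corners, with its intervals merged in pairs, would be a
   d-division with all cells mixed.  So the corners avoid the 2d x 2d grid
   pattern, and the Marcus-Tardos argument bounds them by 2^O(d) n: contract
   t x t blocks (t = 4^k), recurse on the block pattern, and count the blocks
   meeting many of their columns (or rows) by repeatedly halving the column
   range of a strip. *)

From mathcomp Require Import all_boot all_algebra zify.
Set Implicit Arguments. Unset Strict Implicit. Unset Printing Implicit Defensive.

(** * Grid patterns *)

Definition pattern := nat -> nat -> bool.

Definition hits (P : pattern) x1 x2 y1 y2 : Prop :=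
  exists x y, [/\ x1 <= x < x2, y1 <= y < y2 & P x y].

Definition has_grid k l (P : pattern) : Prop :=
  exists xs ys : seq nat, [/\ size xs = k.+1, size ys = l.+1 &
    forall i j, i < k -> j < l ->
      hits P (nth 0 xs i) (nth 0 xs i.+1) (nth 0 ys j) (nth 0 ys j.+1)].

Definition tr_pattern (P : pattern) : pattern := fun x y => P y x.

Lemma has_grid_tr k l P : has_grid k l P -> has_grid l k (tr_pattern P).
Proof.
case=> xs [ys] [sx sy G]; exists ys, xs; split=> // i j ilt jlt.
by have [x [y [hx hy Pxy]]] := G j i jlt ilt; exists y, x.
Qed.

Lemma has_grid_lift k l (P P' : pattern) (u v : nat -> nat) :
  {homo u : a b / a <= b} -> {homo v : a b / a <= b} ->
  (forall x y, P x y -> exists x' y',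
      [/\ u x <= x' < u x.+1, v y <= y' < v y.+1 & P' x' y']) ->
  has_grid k l P -> has_grid k l P'.
Proof.
move=> hu hv H [xs [ys [sx sy G]]].
exists (map u xs), (map v ys); rewrite !size_map; split=> // i j ilt jlt.
have [x [y [/andP[a1 a2] /andP[b1 b2] p]]] := G i j ilt jlt.
have [x' [y' [/andP[c1 c2] /andP[d1 d2] p']]] := H x y p.
rewrite !(nth_map 0) ?sx ?sy; try lia.
exists x', y'; split=> //; apply/andP; split.
- exact: leq_trans (hu _ _ a1) c1.
- exact: leq_trans c2 (hu _ _ a2).
- exact: leq_trans (hv _ _ b1) d1.
- exact: leq_trans d2 (hv _ _ b2).
Qed.

Lemma has_grid_sub k l (P P' : pattern) :
  (forall x y, P x y -> P' x y) -> has_grid k l P -> has_grid k l P'.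
Proof.
move=> H; apply: (has_grid_lift (u := id) (v := id)) => // x y p.
by exists x, y; split; rewrite /= ?leqnn ?ltnSn //; apply: H.
Qed.

Lemma has_grid_scale k l (P P' : pattern) t :
  (forall x y, P x y -> exists i j, [/\ i < t, j < t & P' (x * t + i) (y * t + j)]) ->
  has_grid k l P -> has_grid k l P'.
Proof.
move=> H; apply: (has_grid_lift (u := fun x => x * t) (v := fun y => y * t)).
- by move=> a b ab; rewrite leq_mul2r ab orbT.
- by move=> a b ab; rewrite leq_mul2r ab orbT.
move=> x y /H [i [j [it jt p]]]; exists (x * t + i), (y * t + j).
by rewrite !leq_addr !mulSn ![t + _]addnC !ltn_add2l.
Qed.

Lemma has_grid_extend_right k l (P P' : pattern) h Y :
  0 < l ->
  (forall x y, P' x y -> [/\ y < h, P x y & exists y', [/\ h <= y', y' < Y & P x y']]) ->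
  has_grid k l P' -> has_grid k l.+1 P.
Proof.
move=> l0 H [xs [ys [sx sy G]]].
have stl : size (take l ys) = l by rewrite size_take sy ltnSn.
exists xs, (take l ys ++ [:: h; Y]); split=> //; first by rewrite size_cat stl addn2.
move=> i j ilt jlt; have [jl|jl] := ltnP j.+1 l.
  have jl' : j < l by lia.
  rewrite !nth_cat stl jl jl' !nth_take //.
  have [x [y [h1 h2 h3]]] := G i j ilt jl'.
  by exists x, y; split=> //; case: (H x y h3).
have [jl1|jl1] := ltnP j l.
  have e1 : (j.+1 < l) = false by lia.
  have e2 : j.+1 - l = 0 by lia.
  rewrite !nth_cat stl jl1 e1 e2 /= nth_take //.
  have [x [y [h1 /andP[h2 _] h3]]] := G i j ilt jl1.
  by case: (H x y h3) => yh py _; exists x, y; split=> //; apply/andP.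
have ej : j = l by lia.
have e1 : (l.+1 < l) = false by lia.
subst j; rewrite !nth_cat stl ltnn e1 subnn subSnn /=.
have [x [y [h1 h2 h3]]] := G i l.-1 ilt ltac:(lia).
by case: (H x y h3) => _ _ [y' [a b c]]; exists x, y'; split=> //; apply/andP.
Qed.

Lemma has_grid_extend_left k l (P P' : pattern) h :
  0 < l ->
  (forall x y, P' x y -> [/\ h <= y, P x y & exists y', y' < h /\ P x y']) ->
  has_grid k l P' -> has_grid k l.+1 P.
Proof.
move=> l0 H [xs [ys [sx sy G]]].
exists xs, (0 :: h :: behead ys); split=> //; first by rewrite /= size_behead sy.
move=> i [|[|j]] ilt jlt /=.
- have [x [y [h1 h2 h3]]] := G i 0 ilt l0.
  by case: (H x y h3) => _ _ [y' [a b]]; exists x, y'; split=> //; apply/andP.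
- have [x [y [h1 /andP[_ h2] h3]]] := G i 0 ilt l0.
  case: (H x y h3) => hy py _; exists x, y; split=> //; apply/andP; split=> //.
  by case: ys sy h2 {G} => //= a ys' _; rewrite nth0.
- have [x [y [h1 h2 h3]]] := G i j.+1 ilt jlt.
  case: (H x y h3) => hy py _; exists x, y; split=> //.
  by case: ys sy h2 {G} => //= a ys' _.
Qed.

(** * Strips whose non-empty rows are heavy *)

Lemma sum_nat_gt0P (F : nat -> nat) m n :
  reflect (exists2 y, m <= y < n & 0 < F y) (0 < \sum_(m <= y < n) F y).
Proof.
rewrite lt0n sum_nat_seq_neq0; apply: (iffP hasP) => [[y]|[y]].
  by rewrite mem_index_iota -lt0n => ym Fy; exists y.
by rewrite -mem_index_iota lt0n => ym Fy; exists y.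
Qed.

Lemma sum_bool_count (F : nat -> bool) m n :
  \sum_(m <= y < n) (F y : nat) = count F (index_iota m n).
Proof.
by rewrite -sum1_count [RHS]big_mkcond; apply: eq_bigr => i _; case: (F i).
Qed.

Lemma sum_bool_le (F : nat -> bool) m n : \sum_(m <= y < n) (F y : nat) <= n - m.
Proof. by rewrite sum_bool_count -(size_iota m (n - m)) count_size. Qed.

Lemma leq_sum_nat (F G : nat -> nat) m n : (forall i, m <= i < n -> F i <= G i) ->
  \sum_(m <= i < n) F i <= \sum_(m <= i < n) G i.
Proof.
move=> H; rewrite big_nat_cond [X in _ <= X]big_nat_cond.
by apply: leq_sum => i /andP[/H].
Qed.

Definition row_weight (P : pattern) x lo hi := \sum_(lo <= y < hi) (P x y : nat).

Definition busy_rows (P : pattern) m lo hi :=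
  \sum_(0 <= x < m) (0 < row_weight P x lo hi : nat).

Definition restrict (P : pattern) (C : pred nat) lo hi : pattern :=
  fun x y => [&& C x, lo <= y < hi & P x y].

Lemma row_weight_gt0P (P : pattern) x lo hi :
  reflect (exists2 y, lo <= y < hi & P x y) (0 < row_weight P x lo hi).
Proof.
apply: (iffP (sum_nat_gt0P _ _ _)) => [] [y yr Py]; exists y => //.
- by case: (P x y) Py.
- by rewrite Py.
Qed.

Lemma row_weight_le (P : pattern) x lo hi : row_weight P x lo hi <= hi - lo.
Proof. exact: sum_bool_le. Qed.

Lemma row_weight_split (P : pattern) x lo mid hi : lo <= mid <= hi ->
  row_weight P x lo hi = row_weight P x lo mid + row_weight P x mid hi.
Proof. by move=> /andP[a b]; rewrite /row_weight (big_cat_nat (n := mid)). Qed.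

Lemma row_weight_restrict (P : pattern) C x lo hi :
  row_weight (restrict P C lo hi) x lo hi = if C x then row_weight P x lo hi else 0.
Proof.
rewrite /row_weight /restrict; case: (C x); last by rewrite big1.
by apply: eq_big_nat => y ->.
Qed.

Lemma busy_rows_narrow (P : pattern) m lo hi s : hi - lo < s ->
  (forall x, 0 < row_weight P x lo hi -> s <= row_weight P x lo hi) ->
  busy_rows P m lo hi = 0.
Proof.
move=> narrow heavy; rewrite /busy_rows big1 // => x _.
case: ltnP => // /heavy; have := row_weight_le P x lo hi; lia.
Qed.

Lemma has_grid_col k (P : pattern) m lo hi :
  (forall x y, P x y -> lo <= y < hi) ->
  k <= busy_rows P m lo hi -> has_grid k 1 P.
Proof.
move=> cols; rewrite /busy_rows sum_bool_count -size_filter.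
set S := [seq x <- index_iota 0 m | 0 < row_weight P x lo hi] => kS.
have sS : sorted ltn S.
  by apply: sorted_filter; [exact: ltn_trans | exact: iota_ltn_sorted].
have stk : size (take k S) = k by rewrite size_take; case: ltngtP kS => //; lia.
exists (rcons (take k S) m), [:: lo; hi]; split=> //; first by rewrite size_rcons stk.
move=> i j ik; rewrite ltnS leqn0 => /eqP -> /=.
rewrite !nth_rcons stk ik nth_take //.
have : nth 0 S i \in S by apply: mem_nth; exact: leq_trans ik kS.
rewrite mem_filter mem_index_iota => /andP[/row_weight_gt0P [y yr Py] /andP[_ zm]].
exists (nth 0 S i), y; split => //; apply/andP; split => //.
have [ik1|ki] := ltnP i.+1 k; last by rewrite eqn_leq ik ki.
rewrite nth_take //; apply: (sorted_ltn_nth ltn_trans 0 sS); rewrite ?inE //; lia.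
Qed.

Lemma half_uphalf n : n./2 + uphalf n = n.
Proof. by rewrite uphalf_half addnCA addnn odd_double_half. Qed.

Lemma sq_le_uphalf s : s ^ 2 <= 4 * uphalf s ^ 2.
Proof.
rewrite -[4]/(2 ^ 2) -expnMn leq_exp2r // mul2n -leq_uphalf_double.
by rewrite uphalf_leq.
Qed.

Lemma sq_halves_le T : 1 < T -> 3 * (T./2 ^ 2 + uphalf T ^ 2) <= 2 * T ^ 2.
Proof.
move=> T2; have e := odd_double_half T; rewrite uphalf_half.
have h1 : 0 < T./2 by rewrite -(half_bit_double 1 false) half_leq.
by case: (odd T) e => /= e; rewrite -e -addnn; nia.
Qed.

Lemma row_cover_arith s u w : (0 < u + w -> s <= u + w) ->
  (0 < u + w : nat) <= (0 < (if w == 0 then u else 0)) + (0 < (if u == 0 then w else 0))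
    + (0 < (if (0 < w) && (s <= u.*2) then u else 0))
    + (0 < (if (0 < u) && (s <= w.*2) then w else 0)).
Proof.
case: u => [|u]; case: w => [|w] //= /(_ isT) h.
have [a|a] := leqP s u.+1.*2; have [b|b] := leqP s w.+1.*2; rewrite ?a ?b //=.
by move: a b; rewrite -!addnn; lia.
Qed.

Lemma halving_arith NL NR NX NY S S' A al be ta :
  NL * S <= 8 * A * al -> NR * S <= 8 * A * be ->
  NX * S' <= A * al -> NY * S' <= A * be -> S <= 4 * S' ->
  3 * (al + be) <= 2 * ta ->
  (NL + NR + NX + NY) * S <= 8 * A * ta.
Proof.
move=> hL hR hX hY hS hT.
have hX4 : NX * S <= 4 * (A * al).
  by apply: leq_trans (leq_mul (leqnn NX) hS) _; rewrite mulnCA leq_mul2l hX orbT.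
have hY4 : NY * S <= 4 * (A * be).
  by apply: leq_trans (leq_mul (leqnn NY) hS) _; rewrite mulnCA leq_mul2l hY orbT.
have hT' : 3 * (A * (al + be)) <= 2 * (A * ta).
  by rewrite mulnCA [2 * _]mulnCA leq_mul2l hT orbT.
rewrite !mulnDl; lia.
Qed.

Definition wide_rows_bounded k l w : Prop :=
  forall lo hi m s (P : pattern), hi - lo <= w ->
    (forall x y, P x y -> lo <= y < hi) ->
    (forall x, 0 < row_weight P x lo hi -> s <= row_weight P x lo hi) ->
    2 ^ l.-1 <= s -> ~ has_grid k l P ->
    busy_rows P m lo hi * s ^ 2 <= k.-1 * 8 ^ l.-1 * (hi - lo) ^ 2.

Lemma wide_rows_bounded1 k w : wide_rows_bounded k 1 w.
Proof.
move=> lo hi m s P _ cols weight _ no_grid; rewrite expn0 muln1.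
have few : busy_rows P m lo hi < k.
  by rewrite ltnNge; apply/negP => /(has_grid_col cols).
case: (posnP (busy_rows P m lo hi)) => [-> //|] /sum_nat_gt0P [x _].
rewrite lt0b => /weight; have := row_weight_le P x lo hi => wle sle.
by apply: leq_mul; [lia | rewrite leq_exp2r //; exact: leq_trans sle wle].
Qed.

(* Halve the strip.  Rows living in one half are handled by induction on the
   width; a row meeting both halves has at least s/2 points in one of them,
   and the other half supplies an extra grid column, so induction on l applies. *)
Section Halving.
Variables (k l w : nat).
Hypothesis IHl : forall w', wide_rows_bounded k l.+1 w'.
Hypothesis IHw : wide_rows_bounded k l.+2 w.
Variables (m s lo hi : nat) (P : pattern).
Hypothesis s_large : 2 ^ l.+1 <= s.
Hypothesis width_P : hi - lo <= w.+1.
Hypothesis weight_P : forall x, 0 < row_weight P x lo hi -> s <= row_weight P x lo hi.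
Hypothesis no_grid_P : ~ has_grid k l.+2 P.

Let A := k.-1 * 8 ^ l.

Lemma confined_rows_bound a b (C : pred nat) : b - a <= w ->
  (forall x, C x -> row_weight P x a b = row_weight P x lo hi) ->
  busy_rows (restrict P C a b) m a b * s ^ 2 <= 8 * A * (b - a) ^ 2.
Proof.
move=> ab confined; rewrite /A mulnCA -expnS.
apply: IHw => // [x y /and3P[] | x | g] //.
- by rewrite row_weight_restrict; case: ifP => // /confined ->; exact: weight_P.
- by apply: no_grid_P; apply: has_grid_sub g => x y /and3P[].
Qed.

Lemma heavy_rows_bound a b (C : pred nat) :
  (forall x, C x -> s <= (row_weight P x a b).*2) ->
  ~ has_grid k l.+1 (restrict P C a b) ->
  busy_rows (restrict P C a b) m a b * uphalf s ^ 2 <= A * (b - a) ^ 2.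
Proof.
move=> heavy no_grid; apply: (IHl (w' := b - a)) => // [x y /and3P[] | x |] //.
- by rewrite row_weight_restrict leq_uphalf_double; case: ifP => // /heavy.
- by rewrite geq_uphalf_double -mul2n -expnS ltnW.
Qed.

Hypothesis wide_P : 1 < hi - lo.

Let mid := lo + (hi - lo)./2.
Let rL x := row_weight P x lo mid.
Let rR x := row_weight P x mid hi.

Lemma busy_rows_halves : busy_rows P m lo hi <=
    busy_rows (restrict P (fun x => rR x == 0) lo mid) m lo mid
  + busy_rows (restrict P (fun x => rL x == 0) mid hi) m mid hi
  + busy_rows (restrict P (fun x => (0 < rR x) && (s <= (rL x).*2)) lo mid) m lo mid
  + busy_rows (restrict P (fun x => (0 < rL x) && (s <= (rR x).*2)) mid hi) m mid hi.
Proof.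
rewrite /busy_rows -!big_split /=; apply: leq_sum => x _.
rewrite !row_weight_restrict -/(rL x) -/(rR x).
have hsplit : row_weight P x lo hi = rL x + rR x.
  by apply: row_weight_split; rewrite /mid leq_addr /=; lia.
by rewrite hsplit; apply: row_cover_arith; rewrite -hsplit; exact: weight_P.
Qed.

Lemma wide_rows_halving :
  busy_rows P m lo hi * s ^ 2 <= k.-1 * 8 ^ l.+1 * (hi - lo) ^ 2.
Proof.
have mid_lo : mid - lo = (hi - lo)./2 by rewrite /mid addKn.
have hi_mid : hi - mid = uphalf (hi - lo).
  by rewrite /mid -{1}(subnKC (ltnW wide_P)) -(half_uphalf (hi - lo)); lia.
have half_le : uphalf (hi - lo) <= w.
  by rewrite leq_uphalf_double -addnn; move: width_P; lia.
have lo_mid_hi : lo <= mid <= hi by rewrite /mid leq_addr /=; lia.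
rewrite [8 ^ l.+1]expnS mulnCA -/A.
apply: leq_trans (leq_mul busy_rows_halves (leqnn _)) _.
apply: (halving_arith _ _ _ _ (sq_le_uphalf s) (sq_halves_le wide_P)).
- rewrite -mid_lo; apply: confined_rows_bound;
    first by rewrite mid_lo (leq_trans _ half_le) // uphalf_half leq_addl.
  move=> x /eqP rR0; rewrite (row_weight_split _ _ lo_mid_hi).
  by rewrite -/(rL x) -/(rR x) rR0 addn0.
- rewrite -hi_mid; apply: confined_rows_bound; first by rewrite hi_mid.
  move=> x /eqP rL0; rewrite (row_weight_split _ _ lo_mid_hi).
  by rewrite -/(rL x) -/(rR x) rL0.
- rewrite -mid_lo; apply: heavy_rows_bound => [x /andP[] //|].
  move=> g; apply: no_grid_P; apply: (has_grid_extend_right (h := mid) (Y := hi)) g => //.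
  move=> x y /and3P[/andP[/row_weight_gt0P [y' y'r Py'] _] /andP[_ ymid] Pxy].
  by split=> //; exists y'; case/andP: y'r.
- rewrite -hi_mid; apply: heavy_rows_bound => [x /andP[] //|].
  move=> g; apply: no_grid_P; apply: (has_grid_extend_left (h := mid)) g => //.
  move=> x y /and3P[/andP[/row_weight_gt0P [y' y'r Py'] _] /andP[midy _] Pxy].
  by split=> //; exists y'; case/andP: y'r.
Qed.

End Halving.

Lemma wide_rows_bound k l w : 0 < l -> wide_rows_bounded k l w.
Proof.
case: l => // l _; elim: l w => [|l IHl] w; first exact: wide_rows_bounded1.
have s2 : 1 < 2 ^ l.+1 by rewrite -{1}(expn0 2) ltn_exp2l.
elim: w => [|w IHw] lo hi m s P width cols weight /= s_large no_grid.
  by rewrite (busy_rows_narrow m (s := s)) //; lia.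
have [narrow|wide] := leqP (hi - lo) 1.
  by rewrite (busy_rows_narrow m (s := s)) //; lia.
exact: (wide_rows_halving IHl IHw).
Qed.

(** * The Marcus-Tardos bound *)

Definition weight (P : pattern) n := \sum_(0 <= x < n) \sum_(0 <= y < n) (P x y : nat).

Lemma weight_le_sq (P : pattern) n : weight P n <= n * n.
Proof.
apply: (@leq_trans (\sum_(0 <= x < n) n)); last by rewrite sum_nat_const_nat subn0.
by apply: leq_sum => x _; apply: leq_trans (sum_bool_le _ _ _) _; rewrite subn0.
Qed.

Lemma sum_nat_blocks (F : nat -> nat) n R t : n <= R * t -> (forall x, n <= x -> F x = 0) ->
  \sum_(0 <= x < n) F x = \sum_(0 <= X < R) \sum_(0 <= i < t) F (X * t + i).
Proof.
move=> nRt F0; transitivity (\sum_(0 <= x < R * t) F x).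
  rewrite [RHS](big_cat_nat (leq0n n) nRt) /= [X in _ + X]big_nat_cond.
  by rewrite [X in _ + X]big1 ?addn0 // => x /andP[/andP[/F0]].
rewrite big_nat_mul; apply: eq_bigr => X _.
rewrite -{1}[X * t]add0n big_addn mulSn addnK.
by apply: eq_bigr => i _; rewrite addnC.
Qed.

Lemma has_iota (p : pred nat) j t : j < t -> p j -> has p (iota 0 t).
Proof. by move=> jt pj; apply/hasP; exists j; rewrite // mem_iota. Qed.

Section Blocks.
Variables (P : pattern) (t : nat).

Definition block_pattern : pattern := fun X Y =>
  has (fun i => has (fun j => P (X * t + i) (Y * t + j)) (iota 0 t)) (iota 0 t).

Definition block_weight X Y :=
  \sum_(0 <= i < t) \sum_(0 <= j < t) (P (X * t + i) (Y * t + j) : nat).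

Definition block_width X Y :=
  \sum_(0 <= j < t) (has (fun i => P (X * t + i) (Y * t + j)) (iota 0 t) : nat).

Lemma weight_blocks n R : (forall x y, P x y -> x < n /\ y < n) -> n <= R * t ->
  weight P n = \sum_(0 <= X < R) \sum_(0 <= Y < R) block_weight X Y.
Proof.
move=> bounds nRt; rewrite /weight (sum_nat_blocks nRt); last first.
  by move=> x nx; rewrite big1 // => y _; case: (boolP (P x y)) => // /bounds []; lia.
apply: eq_bigr => X _; rewrite /block_weight [RHS]exchange_big_nat /=.
apply: eq_bigr => i _; rewrite (sum_nat_blocks nRt) //.
by move=> y ny; case: (boolP (P _ y)) => // /bounds []; lia.
Qed.

Lemma block_weight_le_sq X Y : block_weight X Y <= t ^ 2.
Proof.
apply: (@leq_trans (\sum_(0 <= i < t) t)); last by rewrite sum_nat_const_nat subn0.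
by apply: leq_sum => i _; apply: leq_trans (sum_bool_le _ _ _) _; rewrite subn0.
Qed.

Lemma block_pattern_weight X Y : 0 < block_weight X Y -> block_pattern X Y.
Proof.
move=> /sum_nat_gt0P [i /andP[_ it] /sum_nat_gt0P [j /andP[_ jt]]].
by rewrite lt0b => Pij; rewrite /block_pattern (@has_iota _ i) // (@has_iota _ j).
Qed.

End Blocks.

Definition block_height (P : pattern) t X Y := block_width (tr_pattern P) t Y X.

Lemma block_weight_le_dims (P : pattern) t X Y :
  block_weight P t X Y <= block_height P t X Y * block_width P t X Y.
Proof.
rewrite /block_height /block_width /block_weight big_distrlr /=.
apply: leq_sum_nat => i /andP[_ it]; apply: leq_sum_nat => j /andP[_ jt].
case: (boolP (P (X * t + i) (Y * t + j))) => // Pij.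
by rewrite /tr_pattern (@has_iota _ j) ?(@has_iota _ i).
Qed.

Lemma block_weight_bound (P : pattern) t s X Y :
  block_weight P t X Y <= s.-1 ^ 2 * block_pattern P t X Y
    + t ^ 2 * (s <= block_width P t X Y) + t ^ 2 * (s <= block_height P t X Y).
Proof.
have [w|w] := leqP s (block_width P t X Y).
  by rewrite muln1; apply: leq_trans (block_weight_le_sq _ _ _ _) _; lia.
have [h|h] := leqP s (block_height P t X Y).
  by rewrite muln1; apply: leq_trans (block_weight_le_sq _ _ _ _) _; lia.
rewrite !muln0 !addn0; case: (posnP (block_weight P t X Y)) => [-> //|/block_pattern_weight ->].
rewrite muln1; apply: leq_trans (block_weight_le_dims _ _ _ _) _.
by rewrite -mulnn leq_mul // -ltnS prednK //; lia.
Qed.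

Definition block_rows (P : pattern) t : pattern := fun X y =>
  has (fun i => P (X * t + i) y) (iota 0 t).

Lemma row_weight_block_rows (P : pattern) t X Y :
  row_weight (block_rows P t) X (Y * t) (Y * t + t) = block_width P t X Y.
Proof.
rewrite /row_weight -{1}[Y * t]add0n big_addn addKn.
by apply: eq_bigr => j _; rewrite addnC.
Qed.

Definition wide_const k := k.-1 * 8 ^ k.-1 * 4 ^ k.+1.

Lemma wide_blocks_le k (P : pattern) t s Y R :
  0 < k -> t = s * 2 ^ k.+1 -> 2 ^ k.-1 <= s -> ~ has_grid k k P ->
  \sum_(0 <= X < R) (s <= block_width P t X Y : nat) <= wide_const k.
Proof.
move=> k0 ts s_large no_grid.
have s0 : 0 < s by apply: leq_trans s_large; rewrite expn_gt0.
pose Q := restrict (block_rows P t) (fun X => s <= block_width P t X Y) (Y * t) (Y * t + t).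
have busyQ : busy_rows Q R (Y * t) (Y * t + t) = \sum_(0 <= X < R) (s <= block_width P t X Y : nat).
  apply: eq_bigr => X _; rewrite row_weight_restrict row_weight_block_rows.
  by case: (leqP s _) => // /(leq_trans s0) ->.
have noQ : ~ has_grid k k Q.
  move=> g; apply: no_grid; apply: (has_grid_lift (u := fun X => X * t) (v := id)) g.
  - by move=> a b ab; rewrite leq_mul2r ab orbT.
  - by [].
  move=> X y /and3P[_ _ /hasP [i]]; rewrite mem_iota add0n => it Pi.
  by exists (X * t + i), y; rewrite leq_addr mulSn [t + _]addnC ltn_add2l it leqnn ltnSn.
rewrite -(@leq_pmul2r (s ^ 2)) ?expn_gt0 ?s0 // -busyQ.
have -> : wide_const k * s ^ 2 = k.-1 * 8 ^ k.-1 * (Y * t + t - Y * t) ^ 2.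
  by rewrite addKn ts expnMn -expnM mulnC [k.+1 * 2]mulnC expnM /wide_const mulnCA -mulnA.
apply: wide_rows_bound => //.
- by move=> X y /and3P[].
- by move=> X; rewrite row_weight_restrict row_weight_block_rows; case: ifP.
Qed.

Lemma wide_blocks_total k (P : pattern) t s R :
  0 < k -> t = s * 2 ^ k.+1 -> 2 ^ k.-1 <= s -> ~ has_grid k k P ->
  \sum_(0 <= X < R) \sum_(0 <= Y < R) (s <= block_width P t X Y : nat) <= R * wide_const k.
Proof.
move=> k0 ts s_large no_grid; rewrite exchange_big_nat /=.
rewrite -[R]subn0 -sum_nat_const_nat subn0; apply: leq_sum => Y _.
exact: wide_blocks_le.
Qed.

Lemma weight_le_blocks (P : pattern) t s n R :
  (forall x y, P x y -> x < n /\ y < n) -> n <= R * t ->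
  weight P n <= s.-1 ^ 2 * weight (block_pattern P t) R
    + t ^ 2 * \sum_(0 <= X < R) \sum_(0 <= Y < R) (s <= block_width P t X Y : nat)
    + t ^ 2 * \sum_(0 <= X < R) \sum_(0 <= Y < R) (s <= block_height P t X Y : nat).
Proof.
move=> bounds nRt; rewrite (weight_blocks bounds nRt) /weight !big_distrr -!big_split /=.
apply: leq_sum => X _; rewrite !big_distrr -!big_split /=.
by apply: leq_sum => Y _; exact: block_weight_bound.
Qed.

Lemma block_pattern_bounds (P : pattern) t n R X Y :
  (forall x y, P x y -> x < n /\ y < n) -> n <= R * t ->
  block_pattern P t X Y -> X < R /\ Y < R.
Proof.
move=> bounds nRt /hasP [i _] /hasP [j _] /bounds [xn yn].
have lt_R Z k : Z * t + k < n -> Z < R.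
  by move=> Zn; rewrite ltnNge; apply/negP => RZ; have := leq_mul RZ (leqnn t); lia.
by split; [exact: lt_R xn | exact: lt_R yn].
Qed.

Lemma block_pattern_no_grid k l (P : pattern) t :
  ~ has_grid k l P -> ~ has_grid k l (block_pattern P t).
Proof.
move=> no_grid g; apply: no_grid; apply: (has_grid_scale (t := t)) g => X Y /hasP [i].
rewrite mem_iota add0n => /andP[_ it] /hasP [j].
by rewrite mem_iota add0n => /andP[_ jt] Pij; exists i, j.
Qed.

Definition mt_const k := 8 * 4 ^ k * wide_const k + 4 ^ k.

Lemma blocking_arith c R W T t N n s1 :
  c <= (8 * t * N + t) * R -> W <= R * N -> T <= R * N -> 4 * s1 <= t -> R * t <= 2 * n ->
  s1 * c + t * t * W + t * t * T <= (8 * t * N + t) * n.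
Proof.
move=> hc hW hT hs hR; set B := 8 * t * N + t in hc *.
have a1 : 2 * (s1 * c) <= B * n.
  have e1 : 4 * (s1 * c) <= t * (B * R) by rewrite mulnA leq_mul.
  have e2 : t * (B * R) <= 2 * (B * n).
    by rewrite mulnCA [t * R]mulnC [X in _ <= X]mulnCA leq_mul2l hR orbT.
  lia.
have aWT X : X <= R * N -> t * t * X <= 2 * (t * N * n).
  move=> hX; apply: (@leq_trans (t * t * (R * N))); first by rewrite leq_mul2l hX orbT.
  have -> : t * t * (R * N) = (t * N) * (R * t) by nia.
  by rewrite [X in _ <= X]mulnCA leq_mul2l hR orbT.
have a4 : 8 * (t * N * n) <= B * n by rewrite /B !mulnA leq_mul2r leq_addr orbT.
have := aWT _ hW; have := aWT _ hT; lia.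
Qed.

Lemma block_size_facts k : 0 < k ->
  [/\ 4 <= 4 ^ k, 4 ^ k = 2 ^ k.-1 * 2 ^ k.+1 & 4 * (2 ^ k.-1).-1 ^ 2 <= 4 ^ k].
Proof.
case: k => [//|k] _ /=.
have e4 : 4 ^ k.+1 = 4 * (2 ^ k) ^ 2 by rewrite expnS -expnM [k * 2]mulnC expnM.
split.
- by rewrite expnS leq_pmulr ?expn_gt0.
- by rewrite -expnD -[4]/(2 ^ 2) -expnM; congr (_ ^ _); lia.
- by rewrite e4 leq_mul2l leq_exp2r // leq_pred orbT.
Qed.

Theorem marcus_tardos k n (P : pattern) : 0 < k ->
  (forall x y, P x y -> x < n /\ y < n) -> ~ has_grid k k P -> weight P n <= mt_const k * n.
Proof.
move=> k0; elim/ltn_ind: n P => n IH P bounds no_grid.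
(* Blocks of side t = 4^k; a block is wide (tall) when it meets at least
   s = 2^(k-1) of its columns (rows).  Wide and tall blocks are rare, the other
   blocks carry fewer than s^2 points, and the non-empty blocks form a smaller
   grid-free pattern. *)
have [t4 ts st] := block_size_facts k0.
set t := 4 ^ k in t4 ts st *; set s := 2 ^ k.-1 in ts st *.
have [nt|tn] := leqP n t.
  apply: leq_trans (weight_le_sq P n) _; rewrite leq_mul2r; apply/orP; right.
  by apply: leq_trans nt _; rewrite /mt_const leq_addl.
set R := n %/ t + 1.
have nRt : n <= R * t by rewrite mulnDl mul1n {1}(divn_eq n t) leq_add2l ltnW // ltn_mod; lia.
have Rt2 : R * t <= 2 * n by rewrite mulnDl mul1n (divn_eq n t); lia.
have Rn : R < n.
  have : n %/ t * 4 <= n %/ t * t by rewrite leq_mul2l t4 orbT.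
  rewrite /R; lia.
have IHB := IH R Rn _ (fun X Y => block_pattern_bounds bounds nRt) (block_pattern_no_grid no_grid).
have wide := wide_blocks_total R k0 ts (leqnn s) no_grid.
have tall := wide_blocks_total R k0 ts (leqnn s) (fun g => no_grid (has_grid_tr g)).
rewrite exchange_big_nat /= in tall.
apply: leq_trans (weight_le_blocks s bounds nRt) _.
rewrite /mt_const -/t -!mulnn in IHB st *.
exact: blocking_arith IHB wide tall st Rt2.
Qed.

(** * Corners and mixed divisions *)

Section Mixed.
Variables (n : nat) (M : 'M[bool]_n).

Lemma horizontalS a b c e a' b' c' e' :
  a' <= a -> b <= b' -> c' <= c -> e <= e' ->
  horizontal M a' b' c' e' -> horizontal M a b c e.
Proof.
move=> h1 h2 h3 h4 /forallP H; apply/forallP => x; apply/forallP => x'; apply/forallP => y.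
apply/implyP => /andP[/andP[/andP[p1 p2] /andP[p3 p4]] /andP[/andP[q1 q2] _]].
move: (H x) => /forallP /(_ x') /forallP /(_ y) /implyP; apply.
by rewrite /in_block; apply/andP; split; apply/andP; split; apply/andP; split; lia.
Qed.

Lemma verticalS a b c e a' b' c' e' :
  a' <= a -> b <= b' -> c' <= c -> e <= e' ->
  vertical M a' b' c' e' -> vertical M a b c e.
Proof.
move=> h1 h2 h3 h4 /forallP H; apply/forallP => x; apply/forallP => y; apply/forallP => y'.
apply/implyP => /andP[/andP[/andP[p1 p2] /andP[p3 p4]] /andP[_ /andP[q1 q2]]].
move: (H x) => /forallP /(_ y) /forallP /(_ y') /implyP; apply.
by rewrite /in_block; apply/andP; split; apply/andP; split; apply/andP; split; lia.
Qed.

Lemma mixedS a b c e a' b' c' e' :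
  a' <= a -> b <= b' -> c' <= c -> e <= e' ->
  mixed M a b c e -> mixed M a' b' c' e'.
Proof.
move=> h1 h2 h3 h4 /andP[H V]; apply/andP; split.
- by apply: contra H; apply: horizontalS.
- by apply: contra V; apply: verticalS.
Qed.

Definition corner : pattern := fun x y =>
  [&& x.+1 < n, y.+1 < n & mixed M x x.+2 y y.+2].

End Mixed.

Lemma sorted_ltn_map_iota (f : nat -> nat) m :
  (forall i, i < m -> f i < f i.+1) -> sorted ltn (map f (iota 0 m.+1)).
Proof.
move=> f_incr; rewrite (sorted_pairwise ltn_trans) pairwise_map.
apply/(pairwiseP 0) => i j; rewrite !inE size_iota => ilt jlt ij.
rewrite !nth_iota // !add0n; elim: j ij jlt => // j IHj; rewrite ltnS leq_eqVlt.
case/orP => [/eqP -> jm|ij jm]; first exact: f_incr.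
by apply: ltn_trans (IHj ij (ltnW jm)) (f_incr j _).
Qed.

(* The i-th coarse interval joins the fine intervals 2i and 2i+1 (stretched to
   0 and n at the ends); the odd one leaves room for a 2 x 2 window starting in
   the even one. *)
Lemma coarsen_partition (xs : seq nat) n d : 0 < d -> size xs = (2 * d).+1 ->
  (forall i, i < 2 * d -> exists2 x, nth 0 xs i <= x < nth 0 xs i.+1 & x.+1 < n) ->
  exists2 R, interval_partition n d R &
    forall i x, i < d -> nth 0 xs (2 * i) <= x < nth 0 xs (2 * i).+1 ->
      nth 0 R i <= x /\ x.+2 <= nth 0 R i.+1.
Proof.
move=> d0 sx inhabited.
pose f i := if i == 0 then 0 else if i == d then n else nth 0 xs (2 * i).
have f_lo i : i < d -> f i <= nth 0 xs (2 * i).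
  by rewrite /f; case: eqP => // _; case: eqP => // ->; rewrite ltnn.
have f_hi i : i < d -> nth 0 xs (2 * i).+1 < f i.+1.
  move=> id; have [x /andP[a b] c] := inhabited (2 * i).+1 ltac:(lia).
  rewrite /f /= (_ : 2 * i.+1 = (2 * i).+2); last by lia.
  by case: eqP => [|_]; lia.
have xs_incr i : i < d -> nth 0 xs (2 * i) < nth 0 xs (2 * i).+1.
  by move=> id; have [x /andP[a b] _] := inhabited (2 * i) ltac:(lia); lia.
have nth_f i : i <= d -> nth 0 (map f (iota 0 d.+1)) i = f i.
  by move=> id; rewrite (nth_map 0) ?size_iota ?nth_iota.
exists (map f (iota 0 d.+1)); last first.
  move=> i x id /andP[a b]; rewrite !nth_f; try lia.
  by have := f_lo i id; have := f_hi i id; lia.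
apply/and4P; split.
- by rewrite size_map size_iota.
- apply: sorted_ltn_map_iota => i id.
  by have := f_lo i id; have := f_hi i id; have := xs_incr i id; lia.
- by rewrite /= /f eqxx.
- rewrite -(nth_last 0) size_map size_iota /= nth_f // /f.
  by case: (d =P 0) => [|_]; [lia | rewrite eqxx].
Qed.

Lemma corner_grid_mixed_division n (M : 'M[bool]_n) d : 0 < d ->
  has_grid (2 * d) (2 * d) (corner M) -> has_mixed_division M d.
Proof.
move=> d0 [xs [ys [sx sy G]]]; have d2 : 0 < 2 * d by lia.
have rows_ok i : i < 2 * d -> exists2 x, nth 0 xs i <= x < nth 0 xs i.+1 & x.+1 < n.
  by move=> id; have [x [y [hx _ /and3P[xn _ _]]]] := G i 0 id d2; exists x.
have cols_ok j : j < 2 * d -> exists2 y, nth 0 ys j <= y < nth 0 ys j.+1 & y.+1 < n.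
  by move=> jd; have [x [y [_ hy /and3P[_ yn _]]]] := G 0 j d2 jd; exists y.
have [R partR inR] := coarsen_partition d0 sx rows_ok.
have [C partC inC] := coarsen_partition d0 sy cols_ok.
exists R, C; split=> // i j id jd.
have [x [y [hx hy /and3P[_ _ mixed_xy]]]] := G (2 * i) (2 * j) ltac:(lia) ltac:(lia).
have [a b] := inR i x id hx; have [a' b'] := inC j y jd hy.
exact: mixedS a b a' b' mixed_xy.
Qed.

(** * Maximal rectangles *)

Definition maximal_run (Q : pred nat) a b : Prop :=
  [/\ forall z, a <= z < b -> Q z, (a == 0) || ~~ Q a.-1 & ~~ Q b].

Lemma maximal_run_exists (Q : pred nat) bnd x : Q x -> ~~ Q bnd -> x < bnd ->
  exists a b, [/\ a <= x < b, b <= bnd & maximal_run Q a b].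
Proof.
move=> Qx Qb xb.
have exb : exists z, (x <= z) && ~~ Q z by exists bnd; rewrite Qb ltnW.
case: (ex_minnP exb) => b /andP[xb' nQb] bmin.
have exa : exists a, (a <= x) && all Q (iota a (x.+1 - a)).
  by exists x; rewrite leqnn subSnn /= Qx.
case: (ex_minnP exa) => a /andP[ax allQ] amin.
have Qab z : a <= z < b -> Q z.
  move=> /andP[az zb]; have [zx|xz] := leqP z x.
    by move/allP: allQ; apply; rewrite mem_iota; lia.
  case: (boolP (Q z)) => // nQ.
  by have := bmin z; rewrite nQ andbT => /(_ (ltnW xz)); lia.
have xltb : x < b by rewrite ltn_neqAle xb' andbT; apply: contraNneq nQb => <-.
exists a, b; split => //; first by rewrite ax xltb.
  by apply: bmin; rewrite Qb ltnW.
split=> //; case: a amin ax allQ Qab => [//|a] amin ax allQ _ /=.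
apply/negP => Qa; have := amin a; rewrite (ltnW ax) /=.
have -> : x.+1 - a = (x.+1 - a.+1).+1 by lia.
by rewrite /= Qa allQ => /(_ isT); rewrite ltnn.
Qed.

Lemma maximal_run_unique (Q : pred nat) a b a' b' x :
  maximal_run Q a b -> maximal_run Q a' b' ->
  a <= x < b -> a' <= x < b' -> a = a' /\ b = b'.
Proof.
move=> [Q_ab a_max b_max] [Q_ab' a_max' b_max'] hx hx'.
have ea : a = a'.
  have [h|h|//] := ltngtP a a'.
  - move: a_max'; case: eqP => [|_ /= /negP []]; first lia.
    by apply: Q_ab; lia.
  - move: a_max; case: eqP => [|_ /= /negP []]; first lia.
    by apply: Q_ab'; lia.
split => //; have [h|h|//] := ltngtP b b'.
- by move/negP: b_max; case; apply: Q_ab'; lia.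
- by move/negP: b_max'; case; apply: Q_ab; lia.
Qed.

Section MaxRects.
Variables (n : nat) (M : 'M[bool]_n).

Definition entry (x y : nat) : bool :=
  if insub x is Some i then if insub y is Some j then M i j else false else false.

Lemma entry_ord (i j : 'I_n) : entry i j = M i j.
Proof. by rewrite /entry !valK. Qed.

Lemma entry_out x y : n <= x \/ n <= y -> entry x y = false.
Proof.
rewrite /entry; case=> out; last by case: insub; rewrite // insubN // -leqNgt.
by rewrite insubN // -leqNgt.
Qed.

Definition row_run x c e := [&& c < e, e <= n, all (entry x) (iota c (e - c)),
                                (c == 0) || ~~ entry x c.-1 & ~~ entry x e].

Lemma row_runP x c e :
  row_run x c e -> [/\ c < e, e <= n & maximal_run (entry x) c e].
Proof.
by case/and5P => ce en /allP ones c_max e_max; split=> //; split=> // z hz;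
  apply: ones; rewrite mem_iota; lia.
Qed.

Lemma row_run_out c e : row_run n c e = false.
Proof.
apply/negP => /row_runP [ce _ [ones _ _]].
by have := ones c; rewrite entry_out ?leqnn ?ce //; [move/(_ isT) | left].
Qed.

Definition max_rect (r : rect) : bool :=
  let: ((a, b), (c, e)) := r in
  [&& a < b, b <= n, all (fun x => row_run x c e) (iota a (b - a)),
      (a == 0) || ~~ row_run a.-1 c e & ~~ row_run b c e].

Lemma max_rectP a b c e : max_rect ((a, b), (c, e)) ->
  [/\ a < b, b <= n & maximal_run (fun x => row_run x c e) a b].
Proof.
by case/and5P => ab bn /allP runs a_max b_max; split=> //; split=> // z hz;
  apply: runs; rewrite mem_iota; lia.
Qed.

Lemma max_rect_valid r : max_rect r -> rect_valid n r.
Proof.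
case: r => [[a b] [c e]] /max_rectP [ab bn [runs _ _]].
have /row_runP [ce en _] : row_run a c e by apply: runs; rewrite leqnn ab.
by rewrite /rect_valid ab bn ce en.
Qed.

Lemma max_rect_unique a b c e a' b' c' e' x y :
  max_rect ((a, b), (c, e)) -> max_rect ((a', b'), (c', e')) ->
  a <= x < b -> c <= y < e -> a' <= x < b' -> c' <= y < e' ->
  ((a, b), (c, e)) = ((a', b'), (c', e')).
Proof.
move=> /max_rectP [_ _ rows] /max_rectP [_ _ rows'] hx hy hx' hy'.
have /row_runP [_ _ run] : row_run x c e by case: rows => /(_ x hx).
have /row_runP [_ _ run'] : row_run x c' e' by case: rows' => /(_ x hx').
have [ec ee] := maximal_run_unique run run' hy hy'; subst c' e'.
by have [-> ->] := maximal_run_unique rows rows' hx hx'.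
Qed.

Lemma max_rect_ones a b c e x y :
  max_rect ((a, b), (c, e)) -> a <= x < b -> c <= y < e -> entry x y.
Proof.
move=> /max_rectP [_ _ [runs _ _]] /runs /row_runP [_ _ [ones _ _]]; exact: ones.
Qed.

Lemma max_rect_cover (x y : 'I_n) : M x y ->
  exists a b c e, [/\ max_rect ((a, b), (c, e)), a <= x < b & c <= y < e].
Proof.
rewrite -entry_ord => xy.
have [c [e [hy en [ones c_max e_max]]]] :=
  maximal_run_exists xy (negbT (entry_out (x := x) (or_intror (leqnn n)))) (ltn_ord y).
have run_x : row_run x c e.
  apply/and5P; split => //; first lia.
  by apply/allP => z; rewrite mem_iota => hz; apply: ones; lia.
have [a [b [hx bn [runs a_max b_max]]]] :=
  maximal_run_exists (Q := fun z => row_run z c e) run_x (negbT (row_run_out c e)) (ltn_ord x).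
exists a, b, c, e; split => //; apply/and5P; split => //; first lia.
by apply/allP => z; rewrite mem_iota => hz; apply: runs; lia.
Qed.

Definition rect_of_ord (r : ('I_n.+1 * 'I_n.+1) * ('I_n.+1 * 'I_n.+1)) : rect :=
  ((val r.1.1, val r.1.2), (val r.2.1, val r.2.2)).

Lemma rect_of_ord_inj : injective rect_of_ord.
Proof.
by move=> [[a b] [c e]] [[a' b'] [c' e']] [] /val_inj-> /val_inj-> /val_inj-> /val_inj->.
Qed.

Definition max_rects : seq rect :=
  [seq r <- map rect_of_ord (enum {: ('I_n.+1 * 'I_n.+1) * ('I_n.+1 * 'I_n.+1)}) | max_rect r].

Lemma uniq_max_rects : uniq max_rects.
Proof. by rewrite filter_uniq // map_inj_uniq ?enum_uniq //; exact: rect_of_ord_inj. Qed.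

Lemma mem_max_rects r : (r \in max_rects) = max_rect r.
Proof.
rewrite mem_filter; case: (boolP (max_rect r)) => //= mr.
case: r mr => [[a b] [c e]] mr; have /andP[/andP[ab bn] /andP[ce en]] := max_rect_valid mr.
apply/mapP; exists ((inord a, inord b), (inord c, inord e)); first by rewrite mem_enum.
by rewrite /rect_of_ord /= !inordK //; lia.
Qed.

Lemma max_rects_decomposition : rect_decomposition M max_rects.
Proof.
split.
- exact: uniq_max_rects.
- move=> [[a b] [c e]]; rewrite mem_max_rects => mr; split; first exact: max_rect_valid.
  by move=> x y /andP[hx hy]; rewrite -entry_ord; apply: max_rect_ones mr hx hy.
- move=> [[a b] [c e]] [[a' b'] [c' e']]; rewrite !mem_max_rects => mr mr' + x y.
  apply: contra_neqN => /andP[/andP[hx hy] /andP[hx' hy']].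
  exact: max_rect_unique mr mr' hx hy hx' hy'.
- move=> x y; split=> [/max_rect_cover [a [b [c [e [mr hx hy]]]]]|].
    by exists ((a, b), (c, e)); rewrite ?mem_max_rects //= /in_block hx hy.
  move=> [[[a b] [c e]]]; rewrite mem_max_rects => mr /andP[hx hy].
  by rewrite -entry_ord; apply: max_rect_ones mr hx hy.
Qed.

End MaxRects.

(** * Charging maximal rectangles to corners *)

Lemma constant_of_steps (f : nat -> bool) lo hi :
  (forall y, lo <= y < hi -> f y = f y.+1) -> forall z, lo <= z <= hi -> f z = f lo.
Proof.
move=> step z /andP[loz]; rewrite -(subnKC loz); elim: (z - lo) => [|m IH] hm.
  by rewrite addn0.
by rewrite addnS -step ?IH; lia.
Qed.

Definition window_mixed (u v : nat -> bool) y :=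
  ((u y != v y) || (u y.+1 != v y.+1)) && ((u y != u y.+1) || (v y != v y.+1)).

(* A window that is not mixed but where the rows differ has constant rows, so
   a difference propagates along the whole interval. *)
Lemma rows_agree_or_constant (u v : nat -> bool) lo hi :
  (forall y, lo <= y < hi -> ~~ window_mixed u v y) ->
  (forall z, lo <= z <= hi -> u z = v z) \/ (forall z, lo <= z <= hi -> v z = v lo).
Proof.
move=> no_mixed; have [lohi|] := leqP lo hi; last by left=> z; lia.
case: (boolP (has (fun z => u z != v z) (iota lo (hi - lo).+1))); last first.
  by move/hasPn=> agree; left=> z hz; apply/eqP/negPn/agree; rewrite mem_iota; lia.
case/hasP=> z0; rewrite mem_iota => hz0 uv0; right.
pose f y := (u y != v y) && (v y == v z0).
have step y : lo <= y < hi -> f y = f y.+1.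
  move/no_mixed; rewrite /f /window_mixed.
  by case: (u y); case: (v y); case: (u y.+1); case: (v y.+1); case: (v z0).
have f0 : f z0 by rewrite /f uv0 eqxx.
have f_all z : lo <= z <= hi -> f z.
  by move=> hz; rewrite (constant_of_steps step hz) -(constant_of_steps step (z := z0)) //; lia.
by move=> z /f_all /andP[_ /eqP ->]; case/andP: (f_all lo ltac:(lia)) => _ /eqP ->.
Qed.

Section Corners.
Variables (n : nat) (M : 'M[bool]_n).

Lemma corner_of_window x y : x.+1 < n -> y.+1 < n ->
  window_mixed (entry M x) (entry M x.+1) y -> corner M x y.
Proof.
move=> xn yn /andP[rows_differ cols_differ].
have [x0 y0] : x < n /\ y < n by lia.
pose X := Ordinal x0; pose X1 := Ordinal xn; pose Y := Ordinal y0; pose Y1 := Ordinal yn.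
have [e1 e2 e3 e4] : [/\ entry M x y = M X Y, entry M x.+1 y = M X1 Y,
    entry M x y.+1 = M X Y1 & entry M x.+1 y.+1 = M X1 Y1] by rewrite -!entry_ord.
rewrite e1 e2 e3 e4 in rows_differ cols_differ.
have inW (p q : 'I_n) : p \in [:: X; X1] -> q \in [:: Y; Y1] -> in_block x x.+2 y y.+2 p q.
  by rewrite !inE => /orP[] /eqP-> /orP[] /eqP->; rewrite /in_block /= !(leqnn, ltnS, leqnSn).
rewrite /corner xn yn /mixed /=; apply/andP; split; apply/negP => /forallP H.
- have same_col q : q \in [:: Y; Y1] -> M X q = M X1 q.
    move=> hq; apply/eqP; move: (H X) => /forallP /(_ X1) /forallP /(_ q) /implyP; apply.
    by rewrite !inW // !inE eqxx ?orbT.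
  by move: rows_differ; rewrite !same_col ?mem_head ?inE ?eqxx ?orbT.
- have same_row p : p \in [:: X; X1] -> M p Y = M p Y1.
    move=> hp; apply/eqP; move: (H p) => /forallP /(_ Y) /forallP /(_ Y1) /implyP; apply.
    by rewrite !inW // !inE eqxx ?orbT.
  by move: cols_differ; rewrite !same_row ?mem_head ?inE ?eqxx ?orbT.
Qed.

Lemma row_run_agree x x' c e :
  (forall z, c.-1 <= z <= e -> entry M x z = entry M x' z) -> row_run M x c e = row_run M x' c e.
Proof.
move=> agree; rewrite /row_run; case: (ltnP c e) => //= ce.
rewrite !agree ?leqnn ?leq_pred ?(ltnW ce) ?andbT //; try lia.
congr [&& _, _ & _]; apply: eq_in_all => z; rewrite mem_iota => hz; apply: agree; lia.
Qed.

(* Without a corner above [c, e), rows a-1 and a would agree there, making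
   [c, e) a maximal run of row a-1 as well. *)
Lemma corner_above_rect a c e : 0 < a -> a < n -> row_run M a c e -> ~~ row_run M a.-1 c e ->
  ~~ ((c == 0) && (e == n)) -> exists2 y, c.-1 <= y < e & corner M a.-1 y.
Proof.
move=> a0 an run_a not_run not_full.
have [ce en [ones c_max e_max]] := row_runP run_a.
set lo := c.-1; set hi := minn e n.-1.
case: (boolP (has (corner M a.-1) (iota lo (hi - lo)))) => [/hasP [y] | /hasPn no_corner].
  by rewrite mem_iota => hy cy; exists y => //; lia.
have no_mixed y : lo <= y < hi -> ~~ window_mixed (entry M a.-1) (entry M a) y.
  move=> hy; apply: contra (no_corner y _) => [mixed|]; last by rewrite mem_iota; lia.
  by apply: corner_of_window; rewrite ?prednK //; lia.
case: (rows_agree_or_constant no_mixed) => [agree|const].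
  move/negP: not_run; case; rewrite (row_run_agree (x' := a)) // => z hz.
  have [zhi|hiz] := leqP z hi; first by apply: agree; lia.
  by rewrite !entry_out //; right; lia.
have one_c : entry M a c by apply: ones; lia.
case: (posnP c) => [c0|cp].
  have e_n : e != n by apply: contraNneq not_full => ->; rewrite c0 !eqxx.
  have := const e ltac:(lia).
  by rewrite (negbTE e_max) /lo c0 /= -c0 one_c.
move: c_max; rewrite (gtn_eqF cp) /= => /negbTE c_max.
by have := const c ltac:(lia); rewrite one_c /lo c_max.
Qed.

End Corners.

Section Tags.
Variables (n : nat) (M : 'M[bool]_n).

Definition first_corner a c e := nth 0 [seq y <- iota c.-1 (e - c.-1) | corner M a.-1 y] 0.

Lemma first_cornerP a c e : 0 < a -> a < n -> row_run M a c e -> ~~ row_run M a.-1 c e ->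
  ~~ ((c == 0) && (e == n)) ->
  c.-1 <= first_corner a c e < e /\ corner M a.-1 (first_corner a c e).
Proof.
move=> a0 an run_a not_run not_full.
have [y hy cy] := corner_above_rect a0 an run_a not_run not_full.
set s := [seq y <- iota c.-1 (e - c.-1) | corner M a.-1 y].
have ys : y \in s by rewrite mem_filter cy mem_iota; lia.
have : first_corner a c e \in s.
  by apply: mem_nth; rewrite lt0n size_eq0; apply/negP => /eqP s0; move: ys; rewrite /s s0.
by rewrite mem_filter mem_iota => /andP[-> h]; split => //; lia.
Qed.

(* A maximal rectangle is charged to its top-left cell if it touches the top
   edge, to its top row if it spans whole rows, and otherwise to a corner just
   above its top row. *)
Definition rect_tag (r : rect) : nat * nat :=
  let: ((a, b), (c, e)) := r in
  if a == 0 then (0, c) else if (c == 0) && (e == n) then (a, 0) else (a, first_corner a c e).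

Definition tags : seq (nat * nat) :=
  [seq (0, c) | c <- iota 0 n] ++ [seq (a, 0) | a <- iota 0 n] ++
  flatten [seq [seq (x.+1, y) | y <- [seq y <- iota 0 n | corner M x y]] | x <- iota 0 n].

Lemma size_tags : size tags = n + n + weight (corner M) n.
Proof.
rewrite /tags !size_cat !size_map size_iota addnA size_flatten /shape -map_comp sumnE.
rewrite big_map /weight /index_iota subn0; congr (_ + _); apply: eq_bigr => x _.
have := sum_bool_count (corner M x) 0 n; rewrite /index_iota subn0 => ->.
by rewrite /= size_map size_filter.
Qed.

Lemma max_rect_top a b c e : max_rect M ((a, b), (c, e)) ->
  [/\ a < n, row_run M a c e & (a == 0) || ~~ row_run M a.-1 c e].
Proof.
by move=> /max_rectP [ab bn [runs a_max _]]; split=> //; [lia | apply: runs; rewrite leqnn ab].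
Qed.

Lemma rect_tag_in r : max_rect M r -> rect_tag r \in tags.
Proof.
case: r => [[a b] [c e]] /max_rect_top [an run_a a_max].
have [ce en _] := row_runP run_a.
rewrite /rect_tag /tags !mem_cat; case: (posnP a) => [a0|ap].
  by apply/orP; left; apply/mapP; exists c; rewrite ?mem_iota //; lia.
case: (boolP ((c == 0) && (e == n))) => full.
  by apply/orP; right; apply/orP; left; apply/mapP; exists a; rewrite ?mem_iota //; lia.
move: a_max; rewrite (gtn_eqF ap) /= => not_run.
have [hy cy] := first_cornerP ap an run_a not_run full.
apply/orP; right; apply/orP; right; apply/flattenP.
exists [seq (a.-1.+1, y) | y <- [seq y <- iota 0 n | corner M a.-1 y]].
  by apply/mapP; exists a.-1; rewrite // mem_iota; lia.
rewrite prednK //; apply/mapP; exists (first_corner a c e) => //.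
by rewrite mem_filter cy mem_iota /=; move: cy => /and3P[_ ? _]; lia.
Qed.

Lemma row_runs_meet x c e c' e' y : row_run M x c e -> row_run M x c' e' ->
  c.-1 <= y < e -> c'.-1 <= y < e' -> exists2 z, c <= z < e & c' <= z < e'.
Proof.
move=> /row_runP [ce _ [ones _ e_max]] /row_runP [c'e' _ [ones' _ e_max']] hy hy'.
have c'e : c' < e.
  rewrite ltnNge; apply/negP => ec'.
  have : e != c' by apply: contraNneq e_max => ->; apply: ones'; rewrite leqnn c'e'.
  lia.
have ce' : c < e'.
  rewrite ltnNge; apply/negP => e'c.
  have : e' != c by apply: contraNneq e_max' => ->; apply: ones; rewrite leqnn ce.
  lia.
by exists (maxn c c'); lia.
Qed.

Lemma rect_tag_fst r : (rect_tag r).1 = r.1.1.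
Proof. by case: r => [[a b] [c e]] /=; case: ifP => [/eqP -> | _] //; case: ifP. Qed.

Lemma rect_tag_inj : {in max_rects M &, injective rect_tag}.
Proof.
move=> [[a b] [c e]] [[a' b'] [c' e']]; rewrite !mem_max_rects => mr mr' same.
have ea : a = a' by have := congr1 fst same; rewrite !rect_tag_fst.
subst a'; have [ab _ _] := max_rectP mr; have [ab' _ _] := max_rectP mr'.
suff [z hz hz'] : exists2 z, c <= z < e & c' <= z < e'.
  by apply: (max_rect_unique (x := a) (y := z)) mr mr' _ hz _ hz'; rewrite leqnn.
have [an run run_max] := max_rect_top mr; have [_ run' run_max'] := max_rect_top mr'.
have [ce en _] := row_runP run; have [ce' en' _] := row_runP run'.
move: same; rewrite /rect_tag; case: (posnP a) => [_ [cc']|ap]; first by exists c; lia.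
case: (boolP ((c == 0) && (e == n))) => [/andP[/eqP c0 /eqP e0] _|full].
  by exists c'; lia.
case: (boolP ((c' == 0) && (e' == n))) => [/andP[/eqP c0 /eqP e0] _|full'].
  by exists c; lia.
move: run_max run_max'; rewrite (gtn_eqF ap) /= => not_run not_run' [same_y].
have [hy _] := first_cornerP ap an run not_run full.
have [hy' _] := first_cornerP ap an run' not_run' full'.
by rewrite -same_y in hy'; exact: row_runs_meet run run' hy hy'.
Qed.

Lemma size_max_rects : size (max_rects M) <= weight (corner M) n + n + n.
Proof.
have -> : weight (corner M) n + n + n = size tags by rewrite size_tags; lia.
rewrite -(size_map rect_tag); apply: uniq_leq_size.
  by rewrite map_inj_in_uniq ?uniq_max_rects //; exact: rect_tag_inj.
by move=> _ /mapP [r rin ->]; apply: rect_tag_in; rewrite -mem_max_rects.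
Qed.

End Tags.

Lemma wide_const_le k : wide_const k <= 2 ^ (6 * k + 2).
Proof.
rewrite /wide_const -[8]/(2 ^ 3) -[4]/(2 ^ 2) -!expnM.
have km : k.-1 <= 2 ^ k by apply: leq_trans (leq_pred k) (ltnW (ltn_expl k (ltnSn 1))).
apply: leq_trans (leq_mul (leq_mul km (leqnn _)) (leqnn _)) _.
by rewrite -!expnD leq_exp2l //; lia.
Qed.

Lemma mt_const_le k : mt_const k + 2 <= 2 ^ (8 * k + 6).
Proof.
have big : 8 * 4 ^ k * wide_const k <= 2 ^ (8 * k + 5).
  rewrite -[8]/(2 ^ 3) -[4]/(2 ^ 2) -expnM.
  apply: leq_trans (leq_mul (leqnn _) (wide_const_le k)) _.
  by rewrite -!expnD leq_exp2l //; lia.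
have small : 4 ^ k + 2 <= 2 ^ (8 * k + 5).
  rewrite [8 * k + 5]addnS expnS mul2n -addnn leq_add //.
    by rewrite -[4]/(2 ^ 2) -expnM leq_exp2l //; lia.
  by rewrite -{1}(expn1 2) leq_exp2l //; lia.
by rewrite /mt_const [8 * k + 6]addnS expnS mul2n -addnn -addnA leq_add.
Qed.

Theorem lemma6 :
  exists c : nat, forall (d n : nat) (M : 'M[bool]_n),
    0 < d -> mixed_free M d ->
    exists Rs : seq rect, rect_decomposition M Rs /\ size Rs <= 2 ^ (c * d) * n.
Proof.
exists 22 => d n M d0 mf.
exists (max_rects M); split; first exact: max_rects_decomposition.
have no_grid : ~ has_grid (2 * d) (2 * d) (corner M).
  by move=> g; apply: mf; exact: corner_grid_mixed_division.
have corners_in x y : corner M x y -> x < n /\ y < n by case/and3P; lia.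
have corners := marcus_tardos (ltac:(lia) : 0 < 2 * d) corners_in no_grid.
apply: leq_trans (size_max_rects M) _.
apply: (@leq_trans ((mt_const (2 * d) + 2) * n)); first by rewrite mulnDl; lia.
rewrite leq_mul2r; apply/orP; right; apply: leq_trans (mt_const_le (2 * d)) _.
by rewrite leq_exp2l //; lia.
Qed.
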